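(* Let $U\subset\mathbb{R}^2$ be bounded, open and contractible, and let $H:\overline{U}\times\mathbb{R}\to\overline{U}\times\mathbb{R}$ be a homeomorphism with $H(U\times\mathbb{R})=U\times\mathbb{R}$. Then the restriction of $H$ to $U\times\mathbb{R}=U^*\times\mathbb{R}$ extends to a homeomorphism $H^*:X^*\times\mathbb{R}\to X^*\times\mathbb{R}$ (with respect to the metric $d$ below) such that $H^*(\partial X^*\times\mathbb{R})=\partial X^*\times\mathbb{R}$, and $H^*$ extends further to a homeomorphism of the two-point compactification $(X^*\times\mathbb{R})\cup\{\infty,-\infty\}$.
   Context: For $x,y\in U$ let $d^*(x,y)$ be the infimum of the Euclidean diameters of paths in $U$ from $x$ to $y$; this is a metric on $U$. Write $U^*=(U,d^* )$, let $(X^*,d^* )$ be its metric completion and $\partial X^*=X^*\setminus U^*$. $X^*\times\mathbb{R}$ carries the metric $d((x,s),(y,t))=\max(d^*(x,y),|s-t|)$. The space $(X^*\times\mathbb{R})\cup\{\infty,-\infty\}$ is obtained by adjoining one point for each end of $\mathbb{R}$: a sequence $(y_n,t_n)$ converges to $\infty$ iff $t_n\to+\infty$, and to $-\infty$ iff $t_n\to-\infty$. *)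

From Stdlib Require Import Reals.
Open Scope R_scope.

Definition pt2 := (R * R)%type.
Definition pt3 := (pt2 * R)%type.

Definition dist2 (p q : pt2) : R :=
  sqrt ((fst p - fst q)^2 + (snd p - snd q)^2).
Definition dist3 (p q : pt3) : R :=
  sqrt ((fst (fst p) - fst (fst q))^2 + (snd (fst p) - snd (fst q))^2
        + (snd p - snd q)^2).

Definition bounded2 (U : pt2 -> Prop) : Prop :=
  exists M, forall p, U p -> dist2 p (0,0) <= M.
Definition open2 (U : pt2 -> Prop) : Prop :=
  forall p, U p -> exists r, 0 < r /\ forall q, dist2 p q < r -> U q.
Definition closure2 (U : pt2 -> Prop) (p : pt2) : Prop :=
  forall eps, 0 < eps -> exists q, U q /\ dist2 p q < eps.

Definition contractible2 (U : pt2 -> Prop) : Prop :=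
  exists (p0 : pt2) (F : R -> pt2 -> pt2),
    U p0 /\
    (forall t x, 0 <= t <= 1 -> U x -> U (F t x)) /\
    (forall x, U x -> F 0 x = x) /\
    (forall x, U x -> F 1 x = p0) /\
    (forall t x, 0 <= t <= 1 -> U x ->
       forall eps, 0 < eps -> exists delta, 0 < delta /\
         forall s y, 0 <= s <= 1 -> U y -> Rabs (s - t) < delta ->
           dist2 x y < delta -> dist2 (F t x) (F s y) < eps).

Definition cont3_on (S : pt3 -> Prop) (f : pt3 -> pt3) : Prop :=
  forall p, S p -> forall eps, 0 < eps -> exists delta, 0 < delta /\
    forall q, S q -> dist3 p q < delta -> dist3 (f p) (f q) < eps.

Definition homeo3_on (S : pt3 -> Prop) (H : pt3 -> pt3) : Prop :=
  exists G : pt3 -> pt3,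
    (forall p, S p -> S (H p)) /\ (forall p, S p -> S (G p)) /\
    (forall p, S p -> G (H p) = p) /\ (forall p, S p -> H (G p) = p) /\
    cont3_on S H /\ cont3_on S G.

Definition is_path_in (U : pt2 -> Prop) (x y : pt2) (g : R -> pt2) : Prop :=
  g 0 = x /\ g 1 = y /\ (forall s, 0 <= s <= 1 -> U (g s)) /\
  (forall s, 0 <= s <= 1 -> forall eps, 0 < eps -> exists delta, 0 < delta /\
     forall s', 0 <= s' <= 1 -> Rabs (s - s') < delta -> dist2 (g s) (g s') < eps).

Definition diam_of_path (g : R -> pt2) (D : R) : Prop :=
  is_lub (fun r => exists s t, 0 <= s <= 1 /\ 0 <= t <= 1 /\ r = dist2 (g s) (g t)) D.

Definition is_glb (E : R -> Prop) (m : R) : Prop :=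
  (forall x, E x -> m <= x) /\ (forall b, (forall x, E x -> b <= x) -> b <= m).

(* d^*(x,y) = r : the infimum of Euclidean diameters of paths in U from x to y *)
Definition dstar_is (U : pt2 -> Prop) (x y : pt2) (r : R) : Prop :=
  is_glb (fun D => exists g, is_path_in U x y g /\ diam_of_path g D) r.

Definition Upts (U : pt2 -> Prop) := {p : pt2 | U p}.

Definition is_metric {X : Type} (d : X -> X -> R) : Prop :=
  (forall x y, 0 <= d x y) /\ (forall x y, d x y = 0 <-> x = y) /\
  (forall x y, d x y = d y x) /\ (forall x y z, d x z <= d x y + d y z).

Definition cauchy_seq {X : Type} (d : X -> X -> R) (u : nat -> X) : Prop :=
  forall eps, 0 < eps -> exists N, forall m n, (N <= m)%nat -> (N <= n)%nat ->
    d (u m) (u n) < eps.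
Definition seq_conv {X : Type} (d : X -> X -> R) (u : nat -> X) (l : X) : Prop :=
  forall eps, 0 < eps -> exists N, forall n, (N <= n)%nat -> d (u n) l < eps.
Definition complete_metric {X : Type} (d : X -> X -> R) : Prop :=
  forall u, cauchy_seq d u -> exists l, seq_conv d u l.

Definition is_completion_of_Ustar (U : pt2 -> Prop) (X : Type)
  (d : X -> X -> R) (iota : Upts U -> X) : Prop :=
  is_metric d /\ complete_metric d /\
  (forall x y : Upts U, dstar_is U (proj1_sig x) (proj1_sig y) (d (iota x) (iota y))) /\
  (forall z eps, 0 < eps -> exists x, d z (iota x) < eps).

Definition dmax {X : Type} (d : X -> X -> R) (p q : X * R) : R :=
  Rmax (d (fst p) (fst q)) (Rabs (snd p - snd q)).

Definition cont_metric {A B : Type} (dA : A -> A -> R) (dB : B -> B -> R)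
  (f : A -> B) : Prop :=
  forall p eps, 0 < eps -> exists delta, 0 < delta /\
    forall q, dA p q < delta -> dB (f p) (f q) < eps.

Definition homeo_metric {A : Type} (dA : A -> A -> R) (f : A -> A) : Prop :=
  exists g : A -> A, (forall p, g (f p) = p) /\ (forall p, f (g p) = p) /\
    cont_metric dA dA f /\ cont_metric dA dA g.

(* two-point compactification (X x R) u {+oo, -oo} *)
Inductive ext2 (A : Type) : Type :=
| Fin : A -> ext2 A
| PInf : ext2 A
| NInf : ext2 A.
Arguments Fin {A} _.
Arguments PInf {A}.
Arguments NInf {A}.

Definition ext_conv {X : Type} (d : X -> X -> R) (u : nat -> ext2 (X * R))
  (l : ext2 (X * R)) : Prop :=
  match l with
  | Fin p => forall eps, 0 < eps -> exists N, forall n, (N <= n)%nat ->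
      exists q, u n = Fin q /\ dmax d q p < eps
  | PInf => forall M, exists N, forall n, (N <= n)%nat ->
      u n = PInf \/ exists q, u n = Fin q /\ M < snd q
  | NInf => forall M, exists N, forall n, (N <= n)%nat ->
      u n = NInf \/ exists q, u n = Fin q /\ snd q < M
  end.

(* homeomorphism of the (sequentially defined) two-point compactification *)
Definition homeo_ext {X : Type} (d : X -> X -> R) (E : ext2 (X * R) -> ext2 (X * R)) : Prop :=
  exists F : ext2 (X * R) -> ext2 (X * R),
    (forall a, F (E a) = a) /\ (forall a, E (F a) = a) /\
    (forall u l, ext_conv d u l -> ext_conv d (fun n => E (u n)) (E l)) /\
    (forall u l, ext_conv d u l -> ext_conv d (fun n => F (u n)) (F l)).

From Stdlib Require Import Reals ZArith Lra Lia Psatz Classical ClassicalEpsilon ProofIrrelevance.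
Open Scope R_scope.

(* Since the Euclidean distance is at most [d^*], every point of [X^*] lies over a point of
   the closure of [U], near which [H] is uniformly continuous.  The image under [H] of a short
   path in [U], run while the time moves linearly, is again a short path, so the restriction
   of [H] to [U^* x R] is uniformly continuous near every point of [X^* x R] and extends
   continuously to the completion; so does [H^-1], and the two extensions are inverse to each
   other by density.  Both preserve [U^* x R], hence also its complement [dX^* x R].
   For the ends: by compactness of [cl U x [-S, S]], [H^-1] keeps bounded times bounded, so
   [H] sends large [|t|] to large [|t|]; as [U] is path-connected, the intermediate value
   theorem makes the sign of the time of [H (x, t)] constant for [t] near each end. *)

Lemma sqrt_le_of_sq x y : 0 <= y -> x <= y * y -> sqrt x <= y.
Proof. intros Hy Hx. rewrite <- (sqrt_square y Hy). now apply sqrt_le_1_alt. Qed.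

Lemma le_sqrt_of_sq x y : 0 <= x -> x * x <= y -> x <= sqrt y.
Proof. intros Hx Hy. rewrite <- (sqrt_square x Hx). now apply sqrt_le_1_alt. Qed.

Lemma Rabs_mul_self x : Rabs x * Rabs x = x ^ 2.
Proof. rewrite <- Rabs_mult, Rabs_right; [ring | apply Rle_ge; nra]. Qed.

Lemma dist2_euc p q : dist2 p q = dist_euc (fst p) (snd p) (fst q) (snd q).
Proof. unfold dist2, dist_euc, Rsqr. f_equal. ring. Qed.

Lemma dist2_ge0 p q : 0 <= dist2 p q.
Proof. apply sqrt_pos. Qed.

Lemma dist2_sym p q : dist2 p q = dist2 q p.
Proof. rewrite !dist2_euc. apply distance_symm. Qed.

Lemma dist2_xx p : dist2 p p = 0.
Proof. rewrite dist2_euc. apply distance_refl. Qed.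

Lemma dist2_triangle p q r : dist2 p r <= dist2 p q + dist2 q r.
Proof. rewrite !dist2_euc. apply triangle. Qed.

Lemma Rabs_fst_le_dist2 p q : Rabs (fst p - fst q) <= dist2 p q.
Proof.
  apply le_sqrt_of_sq; [apply Rabs_pos|]. rewrite Rabs_mul_self.
  pose proof (pow2_ge_0 (snd p - snd q)); lra.
Qed.

Lemma Rabs_snd_le_dist2 p q : Rabs (snd p - snd q) <= dist2 p q.
Proof.
  apply le_sqrt_of_sq; [apply Rabs_pos|]. rewrite Rabs_mul_self.
  pose proof (pow2_ge_0 (fst p - fst q)); lra.
Qed.

Lemma dist2_le_Rabs p q : dist2 p q <= Rabs (fst p - fst q) + Rabs (snd p - snd q).
Proof.
  pose proof (Rabs_pos (fst p - fst q)); pose proof (Rabs_pos (snd p - snd q)).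
  apply sqrt_le_of_sq; [lra|]. rewrite <- !Rabs_mul_self. nra.
Qed.

Lemma dist3_sym p q : dist3 p q = dist3 q p.
Proof. unfold dist3. f_equal. ring. Qed.

Lemma dist3_le p q : dist3 p q <= dist2 (fst p) (fst q) + Rabs (snd p - snd q).
Proof.
  pose proof (dist2_ge0 (fst p) (fst q)); pose proof (Rabs_pos (snd p - snd q)).
  apply sqrt_le_of_sq; [lra|].
  assert (E : dist2 (fst p) (fst q) * dist2 (fst p) (fst q)
              = (fst (fst p) - fst (fst q))^2 + (snd (fst p) - snd (fst q))^2)
    by (apply sqrt_sqrt; pose proof (pow2_ge_0 (fst (fst p) - fst (fst q)));
        pose proof (pow2_ge_0 (snd (fst p) - snd (fst q))); lra).
  rewrite <- (Rabs_mul_self (snd p - snd q)). nra.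
Qed.

Lemma dist2_le_dist3 p q : dist2 (fst p) (fst q) <= dist3 p q.
Proof.
  apply sqrt_le_1_alt. pose proof (pow2_ge_0 (snd p - snd q)); lra.
Qed.

Lemma Rabs_snd_le_dist3 p q : Rabs (snd p - snd q) <= dist3 p q.
Proof.
  apply le_sqrt_of_sq; [apply Rabs_pos|]. rewrite Rabs_mul_self.
  pose proof (pow2_ge_0 (fst (fst p) - fst (fst q)));
  pose proof (pow2_ge_0 (snd (fst p) - snd (fst q))); lra.
Qed.

Lemma dstar_ge_dist2 U x y m : dstar_is U x y m -> dist2 x y <= m.
Proof.
  intros [_ Hglb]. apply Hglb. intros D [g [[H0 [H1 _]] [Hub _]]].
  apply Hub. exists 0, 1. rewrite H0, H1. repeat split; lra.
Qed.

Lemma dstar_le_of_path U x y m g D : dstar_is U x y m -> is_path_in U x y g ->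
  (forall s t, 0 <= s <= 1 -> 0 <= t <= 1 -> dist2 (g s) (g t) <= D) -> m <= D.
Proof.
  intros [Hlb _] Hp HD.
  destruct (completeness (fun r => exists s t, 0 <= s <= 1 /\ 0 <= t <= 1 /\ r = dist2 (g s) (g t)))
    as [L HL].
  - exists D. intros r (s & t & Hs & Ht & ->). auto.
  - exists (dist2 (g 0) (g 0)). exists 0, 0. repeat split; lra.
  - apply Rle_trans with L.
    + apply Hlb. now exists g.
    + apply HL. intros r (s & t & Hs & Ht & ->). auto.
Qed.

Lemma dstar_short_path U x y m D : dstar_is U x y m -> m < D ->
  exists g, is_path_in U x y g /\
    forall s t, 0 <= s <= 1 -> 0 <= t <= 1 -> dist2 (g s) (g t) < D.
Proof.
  intros [_ Hglb] HmD.
  destruct (classic (exists D0 g, is_path_in U x y g /\ diam_of_path g D0 /\ D0 < D))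
    as [(D0 & g & Hp & [Hub _] & Hlt) | Hno].
  - exists g. split; auto. intros s t Hs Ht.
    apply Rle_lt_trans with D0; auto. apply Hub. now exists s, t.
  - enough (D <= m) by lra. apply Hglb. intros D0 [g [Hp Hd]].
    apply Rnot_lt_le. intros Hlt. apply Hno. now exists D0, g.
Qed.

Lemma dstar_le_radius U x y m g P e : dstar_is U x y m -> is_path_in U x y g ->
  (forall r, 0 <= r <= 1 -> dist2 P (g r) <= e) -> m <= 2 * e.
Proof.
  intros Hm Hg Hr. apply (dstar_le_of_path U x y m g); auto. intros s t Hs Ht.
  pose proof (dist2_triangle (g s) P (g t)). rewrite (dist2_sym (g s) P) in H.
  pose proof (Hr s Hs). pose proof (Hr t Ht). lra.
Qed.

Lemma Rinv_INR_succ_pos n : 0 < / (INR n + 1).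
Proof. apply Rinv_0_lt_compat. pose proof (pos_INR n). lra. Qed.

Lemma Rinv_INR_succ_small e : 0 < e -> exists N, forall n, (N <= n)%nat -> / (INR n + 1) < e.
Proof.
  intros He. destruct (archimed_cor1 e He) as [N [HN HN0]]. exists N. intros n Hn.
  apply Rle_lt_trans with (/ INR N); auto. apply Rinv_le_contravar.
  - now apply lt_0_INR.
  - apply le_INR in Hn. lra.
Qed.

(** * Continuous extension to a completion *)

Section MaxMetric.
Context {X : Type} (d : X -> X -> R).

Lemma dmax_fst_le p q : d (fst p) (fst q) <= dmax d p q.
Proof. apply Rmax_l. Qed.

Lemma dmax_snd_le p q : Rabs (snd p - snd q) <= dmax d p q.
Proof. apply Rmax_r. Qed.

Lemma dmax_lt p q e : d (fst p) (fst q) < e -> Rabs (snd p - snd q) < e -> dmax d p q < e.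
Proof. apply Rmax_lub_lt. Qed.

Lemma is_metric_dmax : is_metric d -> is_metric (dmax d).
Proof.
  intros (Hnn & Hz & Hs & Ht). unfold dmax. repeat split.
  - intros p q. eapply Rle_trans; [apply Rabs_pos | apply Rmax_r].
  - intros E. destruct x as [x1 x2], y as [y1 y2]; simpl in *.
    pose proof (Rmax_l (d x1 y1) (Rabs (x2 - y2))). pose proof (Rmax_r (d x1 y1) (Rabs (x2 - y2))).
    pose proof (Hnn x1 y1). pose proof (Rabs_pos (x2 - y2)).
    f_equal.
    + apply Hz. lra.
    + destruct (Req_dec (x2 - y2) 0); [lra|]. apply Rabs_pos_lt in H3. lra.
  - intros ->. rewrite (proj2 (Hz _ _) eq_refl), Rminus_diag, Rabs_R0. apply Rmax_left. lra.
  - intros. rewrite Hs, <- Rabs_Ropp. do 2 f_equal. ring.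
  - intros. apply Rmax_lub.
    + apply Rle_trans with (d (fst x) (fst y) + d (fst y) (fst z)); auto.
      apply Rplus_le_compat; apply Rmax_l.
    + apply Rle_trans with (Rabs (snd x - snd y) + Rabs (snd y - snd z)).
      * replace (snd x - snd z) with ((snd x - snd y) + (snd y - snd z)) by ring.
        apply Rabs_triang.
      * apply Rplus_le_compat; apply Rmax_r.
Qed.

Lemma complete_metric_dmax : complete_metric d -> complete_metric (dmax d).
Proof.
  intros Hc u Hu.
  destruct (Hc (fun n => fst (u n))) as [l1 Hl1].
  { intros e He. destruct (Hu e He) as [N HN]. exists N. intros m n Hm Hn.
    eapply Rle_lt_trans; [apply dmax_fst_le | auto]. }
  destruct (R_complete (fun n => snd (u n))) as [l2 Hl2].
  { intros e He. destruct (Hu e He) as [N HN]. exists N. intros n m Hn Hm.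
    eapply Rle_lt_trans; [apply dmax_snd_le | auto]. }
  exists (l1, l2). intros e He.
  destruct (Hl1 e He) as [N1 HN1]. destruct (Hl2 e He) as [N2 HN2].
  exists (max N1 N2). intros n Hn. apply dmax_lt; simpl.
  - apply HN1; lia.
  - apply (HN2 n); lia.
Qed.

End MaxMetric.

Lemma cont_metric_comp {A} (dA : A -> A -> R) f g : cont_metric dA dA f -> cont_metric dA dA g ->
  cont_metric dA dA (fun x => g (f x)).
Proof.
  intros Hf Hg p e He. destruct (Hg (f p) e He) as [d1 [Hd1 H1]].
  destruct (Hf p d1 Hd1) as [d2 [Hd2 H2]]. exists d2. split; auto.
Qed.

Section DenseExtension.
Context {Z Y : Type} (rho : Z -> Z -> R) (iota : Y -> Z).
Hypothesis rho_metric : is_metric rho.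

Definition dense_range := forall p e, 0 < e -> exists a, rho p (iota a) < e.

Definition locally_cauchy (h : Y -> Y) :=
  forall p e, 0 < e -> exists delta, 0 < delta /\ forall a b,
    rho (iota a) p < delta -> rho (iota b) p < delta -> rho (iota (h a)) (iota (h b)) < e.

Definition limit_extension (h : Y -> Y) (F : Z -> Z) :=
  forall p e, 0 < e -> exists delta, 0 < delta /\ forall a,
    rho (iota a) p < delta -> rho (iota (h a)) (F p) <= e.

Lemma limit_extension_exists h : complete_metric rho -> dense_range -> locally_cauchy h ->
  exists F, limit_extension h F.
Proof.
  destruct rho_metric as (Hnn & Hz & Hs & Ht). intros Hc Hd Hl.
  apply (choice (fun p w => forall e, 0 < e -> exists delta, 0 < delta /\
    forall a, rho (iota a) p < delta -> rho (iota (h a)) w <= e)). intros p.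
  destruct (choice (fun n a => rho p (iota a) < / (INR n + 1))) as [a Ha].
  { intros n. apply Hd, Rinv_INR_succ_pos. }
  destruct (Hc (fun n => iota (h (a n)))) as [w Hw].
  { intros e He. destruct (Hl p e He) as [dl [Hdl Hdl']].
    destruct (Rinv_INR_succ_small dl Hdl) as [N HN]. exists N. intros m n Hm Hn.
    apply Hdl'; rewrite Hs; eapply Rlt_trans; eauto. }
  exists w. intros e He. destruct (Hl p (e/2) ltac:(lra)) as [dl [Hdl Hdl']].
  exists dl. split; auto. intros b Hb.
  destruct (Rinv_INR_succ_small dl Hdl) as [N1 HN1]. destruct (Hw (e/2) ltac:(lra)) as [N2 HN2].
  set (n := max N1 N2).
  specialize (HN1 n ltac:(lia)). specialize (HN2 n ltac:(lia)). specialize (Ha n).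
  assert (rho (iota (h b)) (iota (h (a n))) < e/2) by (apply Hdl'; auto; rewrite Hs; lra).
  pose proof (Ht (iota (h b)) (iota (h (a n))) w). lra.
Qed.

Lemma limit_extension_on_range h F : limit_extension h F -> forall a, F (iota a) = iota (h a).
Proof.
  destruct rho_metric as (Hnn & Hz & Hs & Ht). intros HF a. symmetry. apply Hz.
  set (r := rho (iota (h a)) (F (iota a))).
  apply Rle_antisym; [|apply Hnn]. apply Rnot_lt_le. intros Hr.
  destruct (HF (iota a) (r/2) ltac:(lra)) as [dl [Hdl H]].
  specialize (H a). rewrite (proj2 (Hz _ _) eq_refl) in H. specialize (H Hdl). unfold r in *. lra.
Qed.

Lemma limit_extension_continuous h F : dense_range -> limit_extension h F ->
  cont_metric rho rho F.
Proof.
  destruct rho_metric as (Hnn & Hz & Hs & Ht). intros Hd HF p e He.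
  destruct (HF p (e/3) ltac:(lra)) as [dl [Hdl H1]].
  exists (dl/2). split; [lra|]. intros q Hq.
  destruct (HF q (e/3) ltac:(lra)) as [dq [Hdq H2]].
  destruct (Hd q (Rmin dq (dl/2)) ltac:(apply Rmin_pos; lra)) as [a Ha].
  pose proof (Rmin_l dq (dl/2)). pose proof (Rmin_r dq (dl/2)). rewrite Hs in Ha.
  assert (A1 : rho (iota (h a)) (F p) <= e/3).
  { apply H1. pose proof (Ht (iota a) q p) as T. rewrite (Hs q p) in T. lra. }
  assert (A2 : rho (iota (h a)) (F q) <= e/3) by (apply H2; lra).
  pose proof (Ht (F p) (iota (h a)) (F q)) as T. rewrite (Hs (F p) (iota (h a))) in T. lra.
Qed.

Lemma locally_cauchy_extends h : complete_metric rho -> dense_range -> locally_cauchy h ->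
  exists F, cont_metric rho rho F /\ forall a, F (iota a) = iota (h a).
Proof.
  intros Hc Hd Hl. destruct (limit_extension_exists h Hc Hd Hl) as [F HF].
  exists F. split.
  - now apply (limit_extension_continuous h).
  - now apply limit_extension_on_range.
Qed.

Lemma dense_continuous_id F : dense_range -> cont_metric rho rho F ->
  (forall a, F (iota a) = iota a) -> forall p, F p = p.
Proof.
  destruct rho_metric as (Hnn & Hz & Hs & Ht). intros Hd HF Hid p. apply Hz.
  set (r := rho (F p) p). apply Rle_antisym; [|apply Hnn]. apply Rnot_lt_le. intros Hr.
  destruct (HF p (r/2) ltac:(lra)) as [dl [Hdl H1]].
  destruct (Hd p (Rmin dl (r/2)) ltac:(apply Rmin_pos; lra)) as [a Ha].
  pose proof (Rmin_l dl (r/2)). pose proof (Rmin_r dl (r/2)).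
  specialize (H1 (iota a) ltac:(lra)). rewrite Hid in H1.
  pose proof (Ht (F p) (iota a) p) as T. rewrite (Hs (iota a) p) in T. unfold r in *. lra.
Qed.

Lemma extensions_inverse h g F G : dense_range ->
  cont_metric rho rho F -> cont_metric rho rho G ->
  (forall a, F (iota a) = iota (h a)) -> (forall a, G (iota a) = iota (g a)) ->
  (forall a, g (h a) = a) -> forall p, G (F p) = p.
Proof.
  intros Hd Fc Gc Fon Gon Hgh. apply dense_continuous_id; auto.
  - now apply cont_metric_comp.
  - intros a. now rewrite Fon, Gon, Hgh.
Qed.

End DenseExtension.

Lemma closure2_of_mem U p : U p -> closure2 U p.
Proof. intros Hp e He. exists p. now rewrite dist2_xx. Qed.

Lemma Upts_eq U (a b : Upts U) : proj1_sig a = proj1_sig b -> a = b.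
Proof. destruct a, b; simpl; intros ->. f_equal. apply proof_irrelevance. Qed.

Definition embed {U : pt2 -> Prop} {X} (iota : Upts U -> X) (a : Upts U * R) : X * R :=
  (iota (fst a), snd a).

Section Completion.
Context (U : pt2 -> Prop) (X : Type) (d : X -> X -> R) (iota : Upts U -> X).
Hypothesis hX : is_completion_of_Ustar U X d iota.

Lemma completion_dist_ge x y : dist2 (proj1_sig x) (proj1_sig y) <= d (iota x) (iota y).
Proof. destruct hX as (_ & _ & Hds & _). eapply dstar_ge_dist2, Hds. Qed.

Lemma completion_iota_eq (x y : Upts U) : proj1_sig x = proj1_sig y -> iota x = iota y.
Proof.
  destruct hX as ((Hnn & Hz & _) & _ & Hds & _). intros E. apply Hz.
  apply Rle_antisym; [|apply Hnn].
  apply (dstar_le_of_path U _ _ _ (fun _ => proj1_sig x) 0 (Hds x y)).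
  - repeat split; auto.
    + intros; apply (proj2_sig x).
    + intros. exists 1. split; [lra|]. intros. rewrite dist2_xx. lra.
  - intros. rewrite dist2_xx. lra.
Qed.

Lemma completion_path_connected x y : U x -> U y -> exists g, is_path_in U x y g.
Proof.
  destruct hX as (_ & _ & Hds & _). intros Hx Hy.
  destruct (dstar_short_path U x y _ _ (Hds (exist U x Hx) (exist U y Hy))
              (Rlt_plus_1 _)) as [g [Hg _]].
  now exists g.
Qed.

Lemma dense_range_embed : dense_range (dmax d) (embed iota).
Proof.
  destruct hX as (_ & _ & _ & Hden). intros p e He.
  destruct (Hden (fst p) e He) as [x Hx]. exists (x, snd p).
  apply dmax_lt; simpl; auto. now rewrite Rminus_diag, Rabs_R0.
Qed.

(* Since [dist2 <= d^*], the inclusion [U^* -> U] extends to the completion: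
   [P] is the Euclidean limit of the points of [U] approaching [z]. *)
Lemma completion_point_shadow z : exists P, closure2 U P /\
  forall e, 0 < e -> exists delta, 0 < delta /\
    forall x, d (iota x) z < delta -> dist2 (proj1_sig x) P < e.
Proof.
  pose proof hX as ((Hnn & Hz & Hs & Ht) & _ & Hds & Hden).
  destruct (choice (fun n x => d z (iota x) < / (INR n + 1))) as [x Hx].
  { intros n. apply Hden, Rinv_INR_succ_pos. }
  assert (Hcl : forall m n,
             dist2 (proj1_sig (x m)) (proj1_sig (x n)) < / (INR m + 1) + / (INR n + 1)).
  { intros m n. eapply Rle_lt_trans; [apply completion_dist_ge|].
    eapply Rle_lt_trans; [apply (Ht _ z)|]. rewrite Hs. pose proof (Hx m); pose proof (Hx n); lra. }
  assert (Cc : forall f : R * R -> R, (forall p q, Rabs (f p - f q) <= dist2 p q) ->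
     Cauchy_crit (fun n => f (proj1_sig (x n)))).
  { intros f Hf e He. destruct (Rinv_INR_succ_small (e/2) ltac:(lra)) as [N HN].
    exists N. intros n m Hn Hm. unfold Rdist. eapply Rle_lt_trans; [apply Hf|].
    eapply Rlt_le_trans; [apply Hcl|]. pose proof (HN n Hn); pose proof (HN m Hm). lra. }
  destruct (R_complete _ (Cc fst Rabs_fst_le_dist2)) as [l1 Hl1].
  destruct (R_complete _ (Cc snd Rabs_snd_le_dist2)) as [l2 Hl2].
  assert (Hconv : forall e, 0 < e -> exists N, forall n, (N <= n)%nat ->
                   dist2 (proj1_sig (x n)) (l1, l2) < e).
  { intros e He. destruct (Hl1 (e/2) ltac:(lra)) as [N1 H1].
    destruct (Hl2 (e/2) ltac:(lra)) as [N2 H2].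
    exists (max N1 N2). intros n Hn. eapply Rle_lt_trans; [apply dist2_le_Rabs|]. simpl.
    specialize (H1 n ltac:(lia)); specialize (H2 n ltac:(lia)). unfold Rdist in *. lra. }
  exists (l1, l2). split.
  - intros e He. destruct (Hconv e He) as [N HN]. exists (proj1_sig (x N)). split.
    + apply (proj2_sig (x N)).
    + rewrite dist2_sym. apply HN. lia.
  - intros e He. exists (e/4). split; [lra|]. intros y Hy.
    destruct (Hconv (e/4) ltac:(lra)) as [N1 HN1].
    destruct (Rinv_INR_succ_small (e/4) ltac:(lra)) as [N2 HN2].
    set (n := max N1 N2). specialize (HN1 n ltac:(lia)). specialize (HN2 n ltac:(lia)).
    eapply Rle_lt_trans; [apply dist2_triangle with (q := proj1_sig (x n))|].
    pose proof (completion_dist_ge y (x n)). pose proof (Ht (iota y) z (iota (x n))).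
    pose proof (Hx n). lra.
Qed.

End Completion.

(** * The cylinder over the closure of [U] *)

Definition cyl (U : pt2 -> Prop) (p : pt3) : Prop := closure2 U (fst p).

Definition cyl_map (U : pt2 -> Prop) (H : pt3 -> pt3) : Prop :=
  (forall p, cyl U p -> cyl U (H p)) /\ cont3_on (cyl U) H /\
  (forall p, cyl U p -> U (fst p) -> U (fst (H p))).

Lemma cyl_of_mem U (x : Upts U) t : cyl U (proj1_sig x, t).
Proof. apply closure2_of_mem, (proj2_sig x). Qed.

Lemma homeo3_cyl_maps U H : homeo3_on (cyl U) H ->
  (forall p, cyl U p -> (U (fst (H p)) <-> U (fst p))) ->
  exists G, cyl_map U H /\ cyl_map U G /\
    (forall p, cyl U p -> G (H p) = p) /\ (forall p, cyl U p -> H (G p) = p).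
Proof.
  intros (G & HS & GS & GH & HG & Hc & Gc) HU. exists G. repeat split; auto.
  - intros p Hp Hu. now apply HU.
  - intros p Hp Hu. apply (HU (G p) (GS p Hp)). now rewrite HG.
Qed.

Definition keeps_U U (H : pt3 -> pt3) := forall (x : Upts U) t, U (fst (H (proj1_sig x, t))).

Lemma cyl_map_U U H : cyl_map U H -> keeps_U U H.
Proof. intros (_ & _ & HU) x t. apply HU; [apply cyl_of_mem | apply (proj2_sig x)]. Qed.

Definition restrict U H (hU : keeps_U U H) (a : Upts U * R) : Upts U * R :=
  (exist U (fst (H (proj1_sig (fst a), snd a))) (hU (fst a) (snd a)),
   snd (H (proj1_sig (fst a), snd a))).

Lemma restrict_inverse U H G hU gU : (forall p, cyl U p -> G (H p) = p) ->
  forall a, restrict U G gU (restrict U H hU a) = a.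
Proof.
  intros GH [x t]. unfold restrict; simpl.
  assert (E : G (fst (H (proj1_sig x, t)), snd (H (proj1_sig x, t))) = (proj1_sig x, t)).
  { rewrite <- surjective_pairing. apply GH, cyl_of_mem. }
  f_equal; [apply Upts_eq; simpl|]; now rewrite E.
Qed.

Definition lerp s u r := s + r * (u - s).

Lemma lerp_0 s u : lerp s u 0 = s.
Proof. unfold lerp. ring. Qed.

Lemma lerp_1 s u : lerp s u 1 = u.
Proof. unfold lerp. ring. Qed.

Lemma Rabs_lerp_lt s u t r e : 0 <= r <= 1 -> Rabs (s - t) < e -> Rabs (u - t) < e ->
  Rabs (lerp s u r - t) < e.
Proof.
  intros Hr H1 H2. unfold lerp.
  replace (s + r * (u - s) - t) with ((1 - r) * (s - t) + r * (u - t)) by ring.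
  eapply Rle_lt_trans; [apply Rabs_triang|].
  rewrite !Rabs_mult, (Rabs_right r), (Rabs_right (1 - r)) by lra.
  assert ((1 - r) * Rabs (s - t) <= (1 - r) * e) by (apply Rmult_le_compat_l; lra).
  destruct (Req_dec r 0) as [->|Hr0]; [lra|].
  assert (r * Rabs (u - t) < r * e) by (apply Rmult_lt_compat_l; lra).
  lra.
Qed.

Lemma path_image_continuous U H g x y s u : cyl_map U H -> is_path_in U x y g ->
  forall r, 0 <= r <= 1 -> forall e, 0 < e -> exists delta, 0 < delta /\
    forall r', 0 <= r' <= 1 -> Rabs (r - r') < delta ->
      dist3 (H (g r, lerp s u r)) (H (g r', lerp s u r')) < e.
Proof.
  intros (_ & Hc & _) (_ & _ & HgU & Hgc) r Hr e He.
  destruct (Hc (g r, lerp s u r) (closure2_of_mem _ _ (HgU r Hr)) e He) as [d1 [Hd1 Hd1']].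
  destruct (Hgc r Hr (d1/2) ltac:(lra)) as [d2 [Hd2 Hd2']].
  set (k := Rabs (u - s) + 1).
  assert (Hk : 0 < k) by (pose proof (Rabs_pos (u - s)); unfold k; lra).
  exists (Rmin d2 (d1 / (2 * k))). split.
  { apply Rmin_pos; auto. apply Rdiv_lt_0_compat; lra. }
  intros r' Hr' Hrr. pose proof (Rmin_l d2 (d1 / (2 * k))). pose proof (Rmin_r d2 (d1 / (2 * k))).
  apply Hd1'; [apply closure2_of_mem, HgU; auto|].
  eapply Rle_lt_trans; [apply dist3_le|]. simpl.
  assert (A : dist2 (g r) (g r') < d1 / 2) by (apply Hd2'; auto; lra).
  assert (B : Rabs (lerp s u r - lerp s u r') <= d1 / 2).
  { unfold lerp. replace (s + r * (u - s) - (s + r' * (u - s))) with ((r - r') * (u - s)) by ring.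
    rewrite Rabs_mult. apply Rle_trans with ((d1 / (2 * k)) * k).
    - apply Rmult_le_compat; try apply Rabs_pos; unfold k in *; lra.
    - replace (d1 / (2 * k) * k) with (d1 / 2) by (field; lra). lra. }
  lra.
Qed.

Lemma path_image_is_path U H g x y s u : cyl_map U H -> is_path_in U x y g ->
  is_path_in U (fst (H (x, s))) (fst (H (y, u))) (fun r => fst (H (g r, lerp s u r))).
Proof.
  intros HH Hp. pose proof Hp as (H0 & H1 & HgU & _). pose proof HH as (_ & _ & HU).
  repeat split.
  - now rewrite H0, lerp_0.
  - now rewrite H1, lerp_1.
  - intros r Hr. apply HU; [apply closure2_of_mem|]; simpl; auto.
  - intros r Hr e He. destruct (path_image_continuous U H g x y s u HH Hp r Hr e He)
      as [dl [Hdl Hdl']].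
    exists dl. split; auto. intros r' Hr' Hrr.
    eapply Rle_lt_trans; [apply dist2_le_dist3 | auto].
Qed.

Lemma path_image_near U H P t : cyl_map U H -> cyl U (P, t) ->
  forall e, 0 < e -> exists delta, 0 < delta /\
    forall x y g s u, is_path_in U x y g ->
      (forall r, 0 <= r <= 1 -> dist2 P (g r) < delta) ->
      Rabs (s - t) < delta -> Rabs (u - t) < delta ->
      forall r, 0 <= r <= 1 -> dist3 (H (P, t)) (H (g r, lerp s u r)) < e.
Proof.
  intros (_ & Hc & _) HP e He.
  destruct (Hc (P, t) HP e He) as [d1 [Hd1 Hd1']].
  exists (d1/2). split; [lra|]. intros x y g s u (_ & _ & HgU & _) Hg Hs Hu r Hr.
  apply Hd1'; [apply closure2_of_mem, HgU; auto|].
  eapply Rle_lt_trans; [apply dist3_le|]. simpl.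
  rewrite Rabs_minus_sym. pose proof (Hg r Hr). pose proof (Rabs_lerp_lt s u t r _ Hr Hs Hu). lra.
Qed.

Lemma restrict_locally_cauchy U X d iota H (hU : keeps_U U H) :
  is_completion_of_Ustar U X d iota -> cyl_map U H ->
  locally_cauchy (dmax d) (embed iota) (restrict U H hU).
Proof.
  intros HX HH [z t] e He. pose proof HX as ((Hnn & Hz & Hs & Ht) & _ & Hds & _).
  destruct (completion_point_shadow U X d iota HX z) as [P [HP HPz]].
  destruct (path_image_near U H P t HH HP (e/4) ltac:(lra)) as [d1 [Hd1 Hnear]].
  destruct (HPz (d1/4) ltac:(lra)) as [d2 [Hd2 Hd2']].
  exists (Rmin d2 (d1/8)). split; [apply Rmin_pos; lra|].
  pose proof (Rmin_l d2 (d1/8)). pose proof (Rmin_r d2 (d1/8)).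
  intros [x s] [y u] Ha Hb.
  pose proof (Rle_lt_trans _ _ _ (dmax_fst_le d (iota x, s) (z, t)) Ha) as Hxz.
  pose proof (Rle_lt_trans _ _ _ (dmax_snd_le d (iota x, s) (z, t)) Ha) as Hst.
  pose proof (Rle_lt_trans _ _ _ (dmax_fst_le d (iota y, u) (z, t)) Hb) as Hyz.
  pose proof (Rle_lt_trans _ _ _ (dmax_snd_le d (iota y, u) (z, t)) Hb) as Hut.
  simpl in Hxz, Hst, Hyz, Hut.
  assert (Hxy : d (iota x) (iota y) < d1/4).
  { pose proof (Ht (iota x) z (iota y)) as T. rewrite (Hs z) in T. lra. }
  destruct (dstar_short_path U _ _ _ _ (Hds x y) Hxy) as [g [Hg Hgd]].
  assert (Hkey : forall r, 0 <= r <= 1 -> dist3 (H (P, t)) (H (g r, lerp s u r)) < e/4).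
  { apply (Hnear _ _ g s u Hg); try lra. intros r Hr.
    destruct Hg as (Hg0 & _). pose proof (Hgd 0 r ltac:(lra) Hr) as Hr0. rewrite Hg0 in Hr0.
    assert (dist2 P (proj1_sig x) < d1/4) by (rewrite dist2_sym; apply Hd2'; lra).
    pose proof (dist2_triangle P (proj1_sig x) (g r)). lra. }
  unfold restrict, embed; simpl. apply dmax_lt; simpl.
  - apply Rle_lt_trans with (2 * (e/4)); [|lra].
    apply (dstar_le_radius U _ _ _ _ (fst (H (P, t))) _
             (Hds (exist U _ (hU x s)) (exist U _ (hU y u)))
             (path_image_is_path U H g _ _ s u HH Hg)).
    intros r Hr. simpl. pose proof (dist2_le_dist3 (H (P, t)) (H (g r, lerp s u r))).
    pose proof (Hkey r Hr). lra.
  - pose proof (Hkey 0 ltac:(lra)) as K0. pose proof (Hkey 1 ltac:(lra)) as K1.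
    destruct Hg as (Hg0 & Hg1 & _). rewrite Hg0, lerp_0 in K0. rewrite Hg1, lerp_1 in K1.
    pose proof (Rabs_snd_le_dist3 (H (P, t)) (H (proj1_sig x, s))) as A.
    pose proof (Rabs_snd_le_dist3 (H (P, t)) (H (proj1_sig y, u))) as B.
    pose proof (Rdist_tri (snd (H (proj1_sig x, s))) (snd (H (proj1_sig y, u)))
                          (snd (H (P, t)))) as T.
    unfold Rdist in T. rewrite Rabs_minus_sym in A. lra.
Qed.

Lemma cyl_map_extends U X d iota H (hU : keeps_U U H) :
  is_completion_of_Ustar U X d iota -> cyl_map U H ->
  exists Hs, cont_metric (dmax d) (dmax d) Hs /\
    forall a, Hs (embed iota a) = embed iota (restrict U H hU a).
Proof.
  intros HX HH. pose proof HX as (Hm & Hc & _).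
  apply locally_cauchy_extends.
  - now apply is_metric_dmax.
  - now apply complete_metric_dmax.
  - now apply dense_range_embed.
  - now apply restrict_locally_cauchy.
Qed.

(** * Compactness and the ends *)

Lemma INR_unbounded r : exists N : nat, r < INR N.
Proof.
  destruct (archimed (Rabs r)) as [Hup _]. exists (Z.to_nat (up (Rabs r))).
  assert (0 <= up (Rabs r))%Z by (apply le_IZR; pose proof (Rabs_pos r); lra).
  rewrite INR_IZR_INZ, Z2Nat.id by auto. pose proof (Rle_abs r). lra.
Qed.

Section Subsequences.
Variable phi : nat -> nat.
Hypothesis phi_incr : forall n, (phi n < phi (S n))%nat.

Lemma incr_ge_id n : (n <= phi n)%nat.
Proof. induction n; [lia|]. specialize (phi_incr n). lia. Qed.

Lemma incr_monotone m n : (m <= n)%nat -> (phi m <= phi n)%nat.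
Proof. induction 1; [lia|]. specialize (phi_incr m0). lia. Qed.

Lemma Un_cv_subseq u l : Un_cv u l -> Un_cv (fun n => u (phi n)) l.
Proof.
  intros Hu e He. destruct (Hu e He) as [N HN]. exists N. intros n Hn.
  apply HN. pose proof (incr_ge_id n). lia.
Qed.

End Subsequences.

Lemma bounded_seq_convergent_subseq (u : nat -> R) C : (forall n, Rabs (u n) <= C) ->
  exists phi : nat -> nat, (forall n, (phi n < phi (S n))%nat) /\
    exists l, Un_cv (fun n => u (phi n)) l.
Proof.
  intros Hb.
  destruct (Bolzano_Weierstrass u (fun c => -C <= c <= C) (compact_P3 (-C) C)) as [l Hl].
  { intros n. specialize (Hb n). pose proof (Rle_abs (u n)); pose proof (Rle_abs (- u n)).
    rewrite Rabs_Ropp in *. lra. }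
  assert (Hp : forall Nk : nat * nat, exists p,
             (fst Nk <= p)%nat /\ Rabs (u p - l) < / (INR (snd Nk) + 1)).
  { intros [N k]. destruct (Hl (fun y => Rabs (y - l) < / (INR k + 1)) N) as [p [Hp1 Hp2]].
    - exists (mkposreal _ (Rinv_INR_succ_pos k)). intros y Hy. exact Hy.
    - now exists p. }
  destruct (choice _ Hp) as [pick Hpick].
  (* Each index is chosen beyond the previous one, at precision [1/(n+1)]. *)
  pose (phi := fix f (n : nat) : nat :=
    match n with O => pick (O, O) | S m => pick (S (f m), S m) end).
  exists phi. split.
  - intros n. simpl. destruct (Hpick (S (phi n), S n)) as [H1 _]. simpl in H1. lia.
  - exists l. intros e He. destruct (Rinv_INR_succ_small e He) as [N HN].
    exists N. intros n Hn. unfold Rdist.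
    assert (Rabs (u (phi n) - l) < / (INR n + 1)).
    { destruct n; [apply (proj2 (Hpick (O, O))) | apply (proj2 (Hpick (S (phi n), S n)))]. }
    specialize (HN n Hn). lra.
Qed.

Lemma bounded_seq3_cluster (p : nat -> pt3) C :
  (forall n, Rabs (fst (fst (p n))) <= C /\ Rabs (snd (fst (p n))) <= C /\ Rabs (snd (p n)) <= C) ->
  exists c, forall e, 0 < e -> forall N, exists n, (N <= n)%nat /\ dist3 (p n) c < e.
Proof.
  intros Hb.
  destruct (bounded_seq_convergent_subseq (fun n => fst (fst (p n))) C) as [f1 [Hf1 [l1 Hl1]]];
    [intros; apply Hb|].
  destruct (bounded_seq_convergent_subseq (fun n => snd (fst (p (f1 n)))) C) as [f2 [Hf2 [l2 Hl2]]];
    [intros; apply Hb|].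
  destruct (bounded_seq_convergent_subseq (fun n => snd (p (f1 (f2 n)))) C) as [f3 [Hf3 [l3 Hl3]]];
    [intros; apply Hb|].
  exists ((l1, l2), l3). intros e He N.
  assert (Hf23 : forall n, (f2 (f3 n) < f2 (f3 (S n)))%nat).
  { intros n. pose proof (incr_monotone f2 Hf2 (S (f3 n)) (f3 (S n)) (Hf3 n)).
    specialize (Hf2 (f3 n)). lia. }
  destruct (Un_cv_subseq _ Hf23 _ _ Hl1 (e/3) ltac:(lra)) as [K1 HK1].
  destruct (Un_cv_subseq _ Hf3 _ _ Hl2 (e/3) ltac:(lra)) as [K2 HK2].
  destruct (Hl3 (e/3) ltac:(lra)) as [K3 HK3].
  set (k := max N (max K1 (max K2 K3))).
  exists (f1 (f2 (f3 k))). split.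
  - pose proof (incr_ge_id f1 Hf1 (f2 (f3 k))). pose proof (incr_ge_id f2 Hf2 (f3 k)).
    pose proof (incr_ge_id f3 Hf3 k). lia.
  - specialize (HK1 k ltac:(lia)). specialize (HK2 k ltac:(lia)). specialize (HK3 k ltac:(lia)).
    unfold Rdist in *. simpl in *.
    eapply Rle_lt_trans; [apply dist3_le|].
    eapply Rle_lt_trans; [apply Rplus_le_compat_r, dist2_le_Rabs|]. simpl. lra.
Qed.

Lemma bounded2_closure_box U : bounded2 U ->
  exists C, forall P, closure2 U P -> Rabs (fst P) <= C /\ Rabs (snd P) <= C.
Proof.
  intros [M HM]. exists (M + 1). intros P HP. destruct (HP 1 ltac:(lra)) as [q [Hq Hd]].
  pose proof (HM q Hq). pose proof (dist2_triangle P q (0,0)).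
  pose proof (Rabs_fst_le_dist2 P (0,0)). pose proof (Rabs_snd_le_dist2 P (0,0)). simpl in *.
  rewrite Rminus_0_r in *. lra.
Qed.

(* By compactness of the closure of [U] times [[-S, S]]. *)
Lemma cyl_map_time_bounded U H : bounded2 U -> cont3_on (cyl U) H ->
  forall S, exists B, forall p, cyl U p -> Rabs (snd p) <= S -> Rabs (snd (H p)) <= B.
Proof.
  intros Hb Hc S. apply NNPP. intros Hno.
  assert (Hp : forall n : nat, exists p, cyl U p /\ Rabs (snd p) <= S /\ INR n < Rabs (snd (H p))).
  { intros n. apply NNPP. intros Hn. apply Hno. exists (INR n). intros p Hp Hs.
    apply Rnot_lt_le. intros Hlt. apply Hn. now exists p. }
  destruct (choice _ Hp) as [p Hp'].
  destruct (bounded2_closure_box U Hb) as [C HC].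
  destruct (bounded_seq3_cluster p (Rmax C S)) as [c Hcl].
  { intros n. destruct (Hp' n) as [HK [HS _]]. destruct (HC _ HK).
    pose proof (Rmax_l C S). pose proof (Rmax_r C S). repeat split; lra. }
  assert (HcK : cyl U c).
  { intros e He. destruct (Hcl (e/2) ltac:(lra) O) as [n [_ Hn]].
    destruct (Hp' n) as [HK _]. destruct (HK (e/2) ltac:(lra)) as [q [Hq Hdq]].
    exists q. split; auto. eapply Rle_lt_trans; [apply dist2_triangle with (q := fst (p n))|].
    pose proof (dist2_le_dist3 c (p n)). rewrite dist3_sym in Hn. lra. }
  destruct (Hc c HcK 1 ltac:(lra)) as [dl [Hdl Hdl']].
  destruct (INR_unbounded (Rabs (snd (H c)) + 1)) as [N HN].
  destruct (Hcl dl Hdl N) as [n [Hn Hdn]].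
  destruct (Hp' n) as [HK [_ Hbig]].
  rewrite dist3_sym in Hdn. specialize (Hdl' (p n) HK Hdn).
  pose proof (Rabs_snd_le_dist3 (H c) (H (p n))).
  pose proof (Rabs_triang_inv (snd (H (p n))) (snd (H c))) as T.
  rewrite Rabs_minus_sym in T. apply le_INR in Hn. lra.
Qed.

Definition beyond (b : bool) t T := if b then T < t else t < - T.

Lemma beyond_Rabs b t T : beyond b t T -> T < Rabs t.
Proof. unfold beyond, Rabs; destruct b, Rcase_abs; lra. Qed.

Lemma beyond_weaken b t T T' : T' <= T -> beyond b t T -> beyond b t T'.
Proof. unfold beyond; destruct b; lra. Qed.

Lemma beyond_lerp b s u T r : 0 <= r <= 1 -> beyond b s T -> beyond b u T ->
  beyond b (lerp s u r) T.
Proof.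
  intros Hr Hs Hu. unfold beyond, lerp in *.
  assert (Rmin s u <= s + r * (u - s) <= Rmax s u) as Hm.
  { unfold Rmin, Rmax. destruct Rle_dec; split; nra. }
  unfold Rmin, Rmax in Hm. destruct b, Rle_dec; lra.
Qed.

Lemma beyond_witness b T : beyond b (if b then Rabs T + 1 else - (Rabs T + 1)) T.
Proof.
  pose proof (Rle_abs T). pose proof (Rle_abs (- T)). rewrite Rabs_Ropp in *.
  destruct b; simpl; lra.
Qed.

(* Because [G = H^-1] keeps bounded times bounded. *)
Lemma time_escapes U H G : bounded2 U -> cyl_map U G -> (forall p, cyl U p -> cyl U (H p)) ->
  (forall p, cyl U p -> G (H p) = p) ->
  forall S, exists T, forall p, cyl U p -> T < Rabs (snd p) -> S < Rabs (snd (H p)).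
Proof.
  intros Hb (_ & Gc & _) HS GH S. destruct (cyl_map_time_bounded U G Hb Gc S) as [B HB].
  exists B. intros p Hp HT. apply Rnot_le_lt. intros Hle.
  specialize (HB (H p) (HS p Hp) Hle). rewrite GH in HB; auto. lra.
Qed.

Definition clamp r := Rmax 0 (Rmin 1 r).

Lemma clamp_in r : 0 <= clamp r <= 1.
Proof. unfold clamp, Rmax, Rmin. repeat destruct Rle_dec; lra. Qed.

Lemma clamp_id r : 0 <= r <= 1 -> clamp r = r.
Proof. unfold clamp, Rmax, Rmin. repeat destruct Rle_dec; lra. Qed.

Lemma clamp_lipschitz r r' : Rabs (clamp r - clamp r') <= Rabs (r - r').
Proof. unfold clamp, Rmax, Rmin, Rabs. repeat destruct Rle_dec; repeat destruct Rcase_abs; lra. Qed.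

(* Intermediate value theorem: far out, the time of [H] does not vanish, so it keeps its
   sign along a path. *)
Lemma no_sign_change U H T x y g b s u : cyl_map U H ->
  (forall p, cyl U p -> T < Rabs (snd p) -> snd (H p) <> 0) ->
  is_path_in U x y g -> beyond b s T -> beyond b u T ->
  0 < snd (H (x, s)) * snd (H (y, u)).
Proof.
  intros HH Hnz Hp Hs Hu. pose proof Hp as (Hg0 & Hg1 & HgU & _).
  set (f := fun r => snd (H (g (clamp r), lerp s u (clamp r)))).
  assert (Hf : continuity f).
  { intros r0 e He.
    destruct (path_image_continuous U H g x y s u HH Hp (clamp r0) (clamp_in r0) e He)
      as [dl [Hdl Hdl']].
    exists dl. split; auto. intros r' [_ Hr']. simpl in *. unfold Rdist, f in *.
    assert (Hc : Rabs (clamp r0 - clamp r') < dl).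
    { rewrite Rabs_minus_sym. eapply Rle_lt_trans; [apply clamp_lipschitz | auto]. }
    specialize (Hdl' (clamp r') (clamp_in r') Hc).
    rewrite Rabs_minus_sym. eapply Rle_lt_trans; [apply Rabs_snd_le_dist3 | exact Hdl']. }
  apply Rnot_le_lt. intros Hle.
  destruct (IVT_cor f 0 1 Hf ltac:(lra)) as [z [Hz Hfz]].
  { unfold f. rewrite !clamp_id, Hg0, Hg1, lerp_0, lerp_1 by lra. exact Hle. }
  unfold f in Hfz. rewrite clamp_id in Hfz by auto.
  apply (Hnz (g z, lerp s u z)); auto.
  - apply closure2_of_mem, HgU, Hz.
  - apply (beyond_Rabs b), beyond_lerp; auto.
Qed.

Definition sends_end_on U (H : pt3 -> pt3) b c := forall M, exists T, forall p,
  cyl U p -> U (fst p) -> beyond b (snd p) T -> beyond c (snd (H p)) M.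

Lemma cyl_map_sends_end U H G x0 : bounded2 U -> cyl_map U H -> cyl_map U G ->
  (forall p, cyl U p -> G (H p) = p) ->
  (forall x y, U x -> U y -> exists g, is_path_in U x y g) -> U x0 ->
  forall b, exists c, sends_end_on U H b c.
Proof.
  intros Hb HH GG GH Hpc Hx0 b. pose proof HH as (HS & _ & _).
  destruct (time_escapes U H G Hb GG HS GH 0) as [T0 HT0].
  assert (Hnz : forall p, cyl U p -> T0 < Rabs (snd p) -> snd (H p) <> 0).
  { intros p Hp Ht E. specialize (HT0 p Hp Ht). rewrite E, Rabs_R0 in HT0. lra. }
  set (t0 := if b then Rabs T0 + 1 else - (Rabs T0 + 1)).
  pose proof (beyond_witness b T0) as Ht0. fold t0 in Ht0.
  (* The end [b] goes to the end given by the sign of the time of [H (x0, t0)]. *)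
  exists (if Rlt_dec 0 (snd (H (x0, t0))) then true else false).
  intros M. destruct (time_escapes U H G Hb GG HS GH (Rabs M)) as [T1 HT1].
  exists (Rmax T0 T1). intros [x t] Hp HpU Hfar. simpl in *.
  pose proof (beyond_weaken b t _ T0 (Rmax_l T0 T1) Hfar) as F0.
  pose proof (beyond_weaken b t _ T1 (Rmax_r T0 T1) Hfar) as F1.
  specialize (HT1 (x, t) Hp (beyond_Rabs _ _ _ F1)).
  destruct (Hpc x0 x Hx0 HpU) as [g Hg].
  pose proof (no_sign_change U H T0 x0 x g b t0 t HH Hnz Hg Ht0 F0) as Hsign.
  pose proof (Rle_abs M). pose proof (Rle_abs (- M)). rewrite Rabs_Ropp in *.
  destruct (Rlt_dec 0 (snd (H (x0, t0)))) as [Hpos|Hneg]; unfold beyond; simpl.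
  - assert (0 < snd (H (x, t))) by nra.
    rewrite (Rabs_right (snd (H (x, t)))) in HT1 by lra. lra.
  - apply Rnot_lt_le in Hneg. assert (snd (H (x, t)) < 0) by nra.
    rewrite (Rabs_left (snd (H (x, t)))) in HT1 by lra. lra.
Qed.

Definition sends_end {X} (F : X * R -> X * R) b c := forall M, exists T, forall p,
  beyond b (snd p) T -> beyond c (snd (F p)) M.

Lemma extension_sends_end U X d iota H hU Hs b c : is_completion_of_Ustar U X d iota ->
  cont_metric (dmax d) (dmax d) Hs ->
  (forall a, Hs (embed iota a) = embed iota (restrict U H hU a)) ->
  sends_end_on U H b c -> sends_end Hs b c.
Proof.
  intros HX Hc Hon Hend M. pose proof HX as ((_ & _ & Hs' & _) & _ & _ & Hden).
  destruct (Hend (M + 1)) as [T HT]. exists T. intros p Hp.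
  destruct (Hc p (1/2) ltac:(lra)) as [dl [Hdl Hdl']].
  destruct (Hden (fst p) dl Hdl) as [x Hx].
  assert (Hclose : dmax d p (embed iota (x, snd p)) < dl).
  { apply dmax_lt; simpl; auto. now rewrite Rminus_diag, Rabs_R0. }
  specialize (Hdl' _ Hclose). rewrite Hon in Hdl'.
  pose proof (Rle_lt_trans _ _ _ (dmax_snd_le d _ _) Hdl') as Hsnd. simpl in Hsnd.
  assert (K : beyond c (snd (H (proj1_sig x, snd p))) (M + 1))
    by (apply HT; [apply cyl_of_mem | apply (proj2_sig x) | auto]).
  apply Rabs_def2 in Hsnd. unfold beyond in *. destruct c; lra.
Qed.

Lemma extension_sends_some_end U X d iota H G hU Hs : bounded2 U ->
  is_completion_of_Ustar U X d iota -> cyl_map U H -> cyl_map U G ->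
  (forall p, cyl U p -> G (H p) = p) -> cont_metric (dmax d) (dmax d) Hs ->
  (forall a, Hs (embed iota a) = embed iota (restrict U H hU a)) ->
  forall b, exists c, sends_end Hs b c.
Proof.
  intros Hb HX HH GG GH Hc Hon b.
  destruct (classic (exists x0, U x0)) as [[x0 Hx0] | Hempty].
  - destruct (cyl_map_sends_end U H G x0 Hb HH GG GH
                (completion_path_connected U X d iota HX) Hx0 b) as [c Hcend].
    exists c. now apply (extension_sends_end U X d iota H hU).
  - exists b. intros M. exists 0. intros p. exfalso. destruct HX as (_ & _ & _ & Hden).
    destruct (Hden (fst p) 1 ltac:(lra)) as [x _]. apply Hempty. exists (proj1_sig x).
    apply (proj2_sig x).
Qed.

Lemma sends_end_inverse {X} (x0 : X) (Hs Gs : X * R -> X * R) b c e :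
  (forall p, Gs (Hs p) = p) -> sends_end Hs b c -> sends_end Gs c e -> e = b.
Proof.
  intros GH Hh Hg. destruct (Bool.bool_dec e b) as [|Hne]; auto. exfalso.
  destruct (Hg 0) as [TG HTG]. destruct (Hh TG) as [TH HTH].
  set (t := if b then Rabs TH + 1 else - (Rabs TH + 1)).
  pose proof (beyond_witness b TH) as Ht. fold t in Ht.
  specialize (HTG _ (HTH (x0, t) Ht)). rewrite GH in HTG. simpl in HTG.
  unfold beyond, t in *. pose proof (Rabs_pos TH). destruct b, e; try congruence; lra.
Qed.

Lemma end_permutation {X} (Hs Gs : X * R -> X * R) :
  (forall p, Gs (Hs p) = p) -> (forall p, Hs (Gs p) = p) ->
  (forall b, exists c, sends_end Hs b c) -> (forall b, exists c, sends_end Gs b c) ->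
  exists cH cG : bool -> bool, (forall b, cG (cH b) = b) /\ (forall b, cH (cG b) = b) /\
    (forall b, sends_end Hs b (cH b)) /\ (forall b, sends_end Gs b (cG b)).
Proof.
  intros GH HG Hend Gend. destruct (classic (inhabited X)) as [[x0] | Hempty].
  - destruct (choice _ Hend) as [cH HcH]. destruct (choice _ Gend) as [cG HcG].
    exists cH, cG. repeat split; auto; intros b.
    + exact (sends_end_inverse x0 Hs Gs _ _ _ GH (HcH b) (HcG (cH b))).
    + exact (sends_end_inverse x0 Gs Hs _ _ _ HG (HcG b) (HcH (cG b))).
  - exists (fun b => b), (fun b => b).
    repeat split; intros b M; exists 0; intros p; exfalso; apply Hempty; exact (inhabits (fst p)).
Qed.

Definition endpt {A} (b : bool) : ext2 A := if b then PInf else NInf.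

Lemma ext_conv_endpt {X} (d : X -> X -> R) u b : ext_conv d u (endpt b) <->
  forall M, exists N, forall n, (N <= n)%nat ->
    u n = endpt b \/ exists q, u n = Fin q /\ beyond b (snd q) M.
Proof.
  destruct b; simpl; [tauto|]. split; intros Hu M.
  - destruct (Hu (- M)) as [N HN]. exists N. intros n Hn.
    destruct (HN n Hn) as [|[q [E Hq]]]; [now left | right; exists q; split; auto].
  - destruct (Hu (- M)) as [N HN]. exists N. intros n Hn.
    destruct (HN n Hn) as [|[q [E Hq]]]; [now left | right; exists q; split; auto].
    unfold beyond in Hq. lra.
Qed.

Definition ext_map {X} (Hs : X * R -> X * R) (cH : bool -> bool) (a : ext2 (X * R)) :=
  match a with Fin p => Fin (Hs p) | PInf => endpt (cH true) | NInf => endpt (cH false) end.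

Lemma ext_map_endpt {X} (Hs : X * R -> X * R) cH b : ext_map Hs cH (endpt b) = endpt (cH b).
Proof. now destruct b. Qed.

Lemma ext_map_conv {X} (d : X -> X -> R) Hs cH : is_metric d ->
  cont_metric (dmax d) (dmax d) Hs -> (forall b, sends_end Hs b (cH b)) ->
  forall u l, ext_conv d u l -> ext_conv d (fun n => ext_map Hs cH (u n)) (ext_map Hs cH l).
Proof.
  intros Hm Hc Hend u l Hu. destruct (is_metric_dmax d Hm) as (_ & _ & Hsym & _).
  assert (Hends : forall b, ext_conv d u (endpt b) ->
            ext_conv d (fun n => ext_map Hs cH (u n)) (endpt (cH b))).
  { intros b Hb. apply ext_conv_endpt. rewrite ext_conv_endpt in Hb. intros M.
    destruct (Hend b M) as [T HT]. destruct (Hb T) as [N HN].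
    exists N. intros n Hn. destruct (HN n Hn) as [E|[q [E Hq]]]; rewrite E.
    - left. apply ext_map_endpt.
    - right. exists (Hs q). split; auto. }
  destruct l as [p| |]; [| exact (Hends true Hu) | exact (Hends false Hu)].
  simpl. intros e He. destruct (Hc p e He) as [dl [Hdl Hdl']].
  destruct (Hu dl Hdl) as [N HN]. exists N. intros n Hn. destruct (HN n Hn) as [q [E Hq]].
  exists (Hs q). rewrite E. split; auto. rewrite Hsym. apply Hdl'. now rewrite Hsym.
Qed.

Lemma homeo_ext_of_ends {X} (d : X -> X -> R) Hs Gs cH cG : is_metric d ->
  cont_metric (dmax d) (dmax d) Hs -> cont_metric (dmax d) (dmax d) Gs ->
  (forall p, Gs (Hs p) = p) -> (forall p, Hs (Gs p) = p) ->
  (forall b, cG (cH b) = b) -> (forall b, cH (cG b) = b) ->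
  (forall b, sends_end Hs b (cH b)) -> (forall b, sends_end Gs b (cG b)) ->
  exists E, homeo_ext d E /\ forall p, E (Fin p) = Fin (Hs p).
Proof.
  intros Hm Hc Gc GH HG cGH cHG eH eG.
  exists (ext_map Hs cH). split; [|reflexivity].
  exists (ext_map Gs cG). repeat split; try now apply ext_map_conv.
  - intros [p| |]; simpl; now rewrite ?GH, ?ext_map_endpt, ?cGH.
  - intros [p| |]; simpl; now rewrite ?HG, ?ext_map_endpt, ?cHG.
Qed.

Lemma boundary_preserved {U : pt2 -> Prop} {X} (iota : Upts U -> X) (F G : X * R -> X * R) k :
  (forall p, G (F p) = p) -> (forall a, G (embed iota a) = embed iota (k a)) ->
  forall p, (forall x, fst p <> iota x) -> forall x, fst (F p) <> iota x.
Proof.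
  intros GF Gon p Hp x Hx. apply (Hp (fst (k (x, snd (F p))))).
  assert (E : F p = embed iota (x, snd (F p)))
    by (unfold embed; simpl; now rewrite <- Hx, <- surjective_pairing).
  pose proof (Gon (x, snd (F p))) as T. rewrite <- E, GF in T. now rewrite T at 1.
Qed.

Theorem mainTheorem5
  (U : pt2 -> Prop)
  (hUb : bounded2 U) (hUo : open2 U) (hUc : contractible2 U)
  (H : pt3 -> pt3)
  (hH : homeo3_on (fun p => closure2 U (fst p)) H)
  (hHU : forall p, closure2 U (fst p) -> (U (fst (H p)) <-> U (fst p)))
  (X : Type) (d : X -> X -> R) (iota : Upts U -> X)
  (hX : is_completion_of_Ustar U X d iota) :
  exists Hs : X * R -> X * R,
    homeo_metric (dmax d) Hs /\
    (forall (x y : Upts U) (t : R),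
        fst (H (proj1_sig x, t)) = proj1_sig y ->
        Hs (iota x, t) = (iota y, snd (H (proj1_sig x, t)))) /\
    (forall p : X * R, (forall x, fst p <> iota x) ->
        forall x, fst (Hs p) <> iota x) /\
    (forall q : X * R, (forall x, fst q <> iota x) ->
        exists p, (forall x, fst p <> iota x) /\ Hs p = q) /\
    (exists E : ext2 (X * R) -> ext2 (X * R),
        homeo_ext d E /\ forall p, E (Fin p) = Fin (Hs p)).
Proof.
  destruct (homeo3_cyl_maps U H hH hHU) as (G & HH & GG & GH & HG).
  pose proof hX as (Hm & _).
  pose proof (is_metric_dmax d Hm) as Hmax. pose proof (dense_range_embed U X d iota hX) as Hdense.
  set (hU := cyl_map_U U H HH). set (gU := cyl_map_U U G GG).
  destruct (cyl_map_extends U X d iota H hU hX HH) as [Hs [Hsc Hson]].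
  destruct (cyl_map_extends U X d iota G gU hX GG) as [Gs [Gsc Gson]].
  pose proof (extensions_inverse _ _ Hmax _ _ _ _ Hdense Hsc Gsc Hson Gson
                (restrict_inverse U H G hU gU GH)) as GsHs.
  pose proof (extensions_inverse _ _ Hmax _ _ _ _ Hdense Gsc Hsc Gson Hson
                (restrict_inverse U G H gU hU HG)) as HsGs.
  destruct (end_permutation Hs Gs GsHs HsGs
              (extension_sends_some_end U X d iota H G hU Hs hUb hX HH GG GH Hsc Hson)
              (extension_sends_some_end U X d iota G H gU Gs hUb hX GG HH HG Gsc Gson))
    as (cH & cG & cGH & cHG & Hend & Gend).
  exists Hs. split; [|split; [|split; [|split]]].
  - exists Gs. repeat split; assumption.
  - intros x y t E. change (iota x, t) with (embed iota (x, t)). rewrite Hson.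
    unfold embed; simpl. f_equal. now apply (completion_iota_eq U X d iota hX).
  - exact (boundary_preserved iota Hs Gs _ GsHs Gson).
  - intros q Hq. exists (Gs q). split; auto. exact (boundary_preserved iota Gs Hs _ HsGs Hson q Hq).
  - exact (homeo_ext_of_ends d Hs Gs cH cG Hm Hsc Gsc GsHs HsGs cGH cHG Hend Gend).
Qed.
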